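(* Let $m\geq1$ and, for $s\geq2$, set $G(m,s)=sm-\operatorname{zcl}_s(\mathbb{R}\mathrm{P}^m)$. Then $G(m,2)\geq G(m,3)\geq G(m,4)\geq\cdots\geq0$.
   Context: With mod $2$ cohomology, the $s$-th zero-divisors of $\mathbb{R}\mathrm{P}^m$ are the elements of the kernel of $\Delta_s^*\colon H^*((\mathbb{R}\mathrm{P}^m)^{\times s};\mathbb{Z}_2)\to H^*(\mathbb{R}\mathrm{P}^m;\mathbb{Z}_2)$ induced by the diagonal; $\operatorname{zcl}_s(\mathbb{R}\mathrm{P}^m)$ is the maximal number of $s$-th zero-divisors with nonzero product. *)

(* Mod-2 cohomology of (RP^m)^s is presented
   by Kuenneth as  F_2[x_1..x_s]/(x_1^{m+1},...,x_s^{m+1}); the diagonal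
   Delta_s^* sends every x_i to x in H^*(RP^m) = F_2[x]/(x^{m+1}). *)
From HB Require Import structures.
From mathcomp Require Import all_boot all_order all_algebra.
From mathcomp Require Import ssrAC.
From mathcomp Require Import mpoly.
From Stdlib Require Import ClassicalEpsilon.

Unset Implicit Arguments.
Unset Strict Implicit.
Unset Printing Implicit Defensive.

Import GRing.Theory.
Local Open Scope ring_scope.

(* An element of H^*((RP^m)^s;Z_2) is represented by a polynomial in
   {mpoly 'F_2[s]}; it is zero in the cohomology ring iff every monomial
   with all exponents <= m has coefficient 0. *)
Definition cohom_nonzero (m s : nat) (p : {mpoly 'F_2[s]}) : Prop :=
  exists mo : 'X_{1..s}, (forall i : 'I_s, (mo i <= m)%N) /\ p@_mo != 0.

(* Delta_s^* : x_i |-> x ; its image is zero in F_2[x]/(x^{m+1}) iff all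
   coefficients of degree <= m vanish. *)
Definition diag_star (s : nat) (p : {mpoly 'F_2[s]}) : {poly 'F_2} :=
  mmap (@polyC _) (fun _ => 'X) p.

Definition zero_divisor (m s : nat) (p : {mpoly 'F_2[s]}) : Prop :=
  forall i : nat, (i <= m)%N -> (diag_star s p)`_i = 0.

Definition has_zd_product (m s k : nat) : Prop :=
  exists f : 'I_k -> {mpoly 'F_2[s]},
    (forall j, zero_divisor m s (f j)) /\ cohom_nonzero m s (\prod_(j < k) f j).

Definition is_zcl (m s k : nat) : Prop :=
  has_zd_product m s k /\ forall k', has_zd_product m s k' -> (k' <= k)%N.

Definition zcl (m s : nat) : nat :=
  epsilon (inhabits 0%N) (fun k => is_zcl m s k).

Definition G (m s : nat) : int := (s * m)%:Z - (zcl m s)%:Z.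

(** A zero-divisor has vanishing constant term, so a product of
  [k] of them only involves monomials of degree [>= k]; as a nonzero class in
  [F_2[x_1..x_s]/(x_i^(m+1))] has a monomial of degree [<= s m], this gives
  [zcl_s <= s m], i.e. [G(m,s) >= 0].  Conversely, [x_(s+1) + x_1] is an
  [(s+1)]-st zero-divisor in characteristic 2, and multiplying a nonzero
  product of [s]-th zero-divisors (in the first [s] variables) by
  [(x_(s+1) + x_1)^m] keeps it nonzero: the coefficient of the monomial with
  [x_(s+1)]-exponent [m] is read off the [x_(s+1)^m] term alone.  Hence
  [zcl_(s+1) >= zcl_s + m], i.e. [G(m,s+1) <= G(m,s)]. *)
From HB Require Import structures.
From mathcomp Require Import all_boot all_order all_algebra.
From mathcomp Require Import mpoly.
From mathcomp Require Import zify.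
From Stdlib Require Import ClassicalEpsilon Classical.

Set Implicit Arguments.
Unset Strict Implicit.
Unset Printing Implicit Defensive.

Import GRing.Theory.
Local Open Scope ring_scope.

Section MpolyCoefficients.
Variables (R : nzRingType) (n : nat).
Implicit Types (p q : {mpoly R[n]}) (mu : 'X_{1..n}).

Lemma mcoeffMX_if p u mu :
  (p * 'X_[u])@_mu = if (u <= mu)%MM then p@_(mu - u)%MM else 0.
Proof.
case: ifP => [le_u_mu|not_le]; first by rewrite -{1}(submK le_u_mu) addmC mcoeffMX.
apply/memN_msupp_eq0; rewrite (perm_mem (msuppMX _ _)).
by apply/mapP => -[mu' _ def_mu]; rewrite def_mu lem_addr in not_le.
Qed.

Definition vanishes_below p a := forall mu, (mdeg mu < a)%N -> p@_mu = 0.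

Lemma vanishes_belowM p q a b :
  vanishes_below p a -> vanishes_below q b -> vanishes_below (p * q) (a + b).
Proof.
move=> p_low q_low mu lt_mu; rewrite mcoeffM big1 // => -[mu1 mu2] /= /eqP def_mu.
have lt_sum : (mdeg mu1 + mdeg mu2 < a + b)%N by rewrite -mdegD -def_mu.
have [lt1|ge1] := ltnP (mdeg mu1) a; first by rewrite p_low ?mul0r.
by rewrite q_low ?mulr0 //; lia.
Qed.

Lemma vanishes_below_prod k (f : 'I_k -> {mpoly R[n]}) :
  (forall j, vanishes_below (f j) 1) -> vanishes_below (\prod_(j < k) f j) k.
Proof.
elim: k f => [f _ mu|k IHk f f_low]; first by rewrite ltn0.
rewrite big_ord_recr -[X in vanishes_below _ X]addn1.
by apply: vanishes_belowM => //; apply: IHk.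
Qed.

Variable i : 'I_n.

Definition degX_le p d := forall mu, (d < mu i)%N -> p@_mu = 0.

Lemma degX_leMX p d (l : 'I_n) : degX_le p d -> degX_le (p * 'X_l) d.+1.
Proof.
move=> p_deg mu lt_mu; rewrite mcoeffMX_if; case: ifP => // _.
by rewrite p_deg // mnmBE mnm1E; case: eqP => _ /=; lia.
Qed.

Variables (k : 'I_n) (neq_ik : i != k).
Let z : {mpoly R[n]} := 'X_i + 'X_k.

Lemma degX_leMz p d : degX_le p d -> degX_le (p * z) d.+1.
Proof.
by move=> p_deg mu lt_mu; rewrite mulrDr mcoeffD !(degX_leMX _ p_deg) ?addr0.
Qed.

Lemma degX_leMz_exp p d j : degX_le p d -> degX_le (p * z ^+ j) (d + j).
Proof.
move=> p_deg; elim: j => [|j IHj]; first by rewrite expr0 mulr1 addn0.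
by rewrite exprSr mulrA addnS; apply: degX_leMz.
Qed.

(* Only the [X_i^j] term of [z^j] reaches [X_i]-exponent [mu i + j]. *)
Lemma mcoeffMz_exp_top p mu j :
  degX_le p (mu i) -> (p * z ^+ j)@_(mu + U_(i) *+ j)%MM = p@_mu.
Proof.
move=> p_deg; elim: j => [|j IHj]; first by rewrite expr0 mulr1 mulm0n addm0.
have -> : (mu + U_(i) *+ j.+1 = U_(i) + (mu + U_(i) *+ j))%MM.
  by rewrite mulmS addmA [(mu + _)%MM]addmC addmA.
rewrite exprSr mulrA mulrDr mcoeffD mcoeffMX IHj mcoeffMX_if.
case: ifP => _; last by rewrite addr0.
rewrite (degX_leMz_exp p_deg) ?addr0 // !mnmBE !mnmDE mulmnE !mnm1E eqxx.
by rewrite eq_sym (negbTE neq_ik) /=; lia.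
Qed.

End MpolyCoefficients.

Lemma degX_le_mwiden (R : nzRingType) n (p : {mpoly R[n]}) :
  degX_le ord_max (mwiden p) 0.
Proof.
move=> mu pos_mu; rewrite (mwidenE (k := msize p)) // raddf_sum big1 //= => nu _.
rewrite mcoeffZ mcoeffX; case: eqP => [def_mu|]; last by rewrite mulr0.
by rewrite -def_mu mnmwiden_ordmax in pos_mu.
Qed.

Lemma mnmwiden_le n (mu : 'X_{1..n}) d :
  (forall i, mu i <= d)%N -> (forall i, mnmwiden mu i <= d)%N.
Proof.
move=> mu_le i; have [j ->|->] := unliftP ord_max i; last by rewrite mnmwiden_ordmax.
have -> : lift ord_max j = widen_ord (leqnSn n) j.
  by apply/val_inj; rewrite /= /bump leqNgt ltn_ord.
by rewrite mnmwiden_widen.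
Qed.

Lemma diag_starXD s c mu (p : {mpoly 'F_2[s]}) :
  diag_star s (c *: 'X_[mu] + p) = c%:P * 'X^(mdeg mu) + diag_star s p.
Proof. by rewrite /diag_star mmapD mmapZ mmapX /mmap1 prodrXr -mdegE. Qed.

Lemma coef0_diag_star s (p : {mpoly 'F_2[s]}) : (diag_star s p)`_0 = p@_0%MM.
Proof.
elim/mpolyind: p => [|c mu p _ _ IHp]; first by rewrite /diag_star mmap0 coef0 mcoeff0.
rewrite diag_starXD coefD IHp coefCM coefXn mcoeffD mcoeffZ mcoeffX.
by rewrite -mdeg_eq0 eq_sym.
Qed.

Lemma mdeg_mnmwiden s (mu : 'X_{1..s}) : mdeg (mnmwiden mu) = mdeg mu.
Proof.
rewrite !mdegE big_ord_recr /= mnmwiden_ordmax addn0.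
by apply: eq_bigr => i _; rewrite mnmwiden_widen.
Qed.

Lemma diag_star_mwiden s (p : {mpoly 'F_2[s]}) :
  diag_star s.+1 (mwiden p) = diag_star s p.
Proof.
elim/mpolyind: p => [|c mu p _ _ IHp]; first by rewrite /diag_star mwiden0 !mmap0.
by rewrite mwidenD mwidenZ mwidenX !diag_starXD IHp mdeg_mnmwiden.
Qed.

Lemma diag_star_addX s (i j : 'I_s) : diag_star s ('X_i + 'X_j) = 0.
Proof.
have char2 : (2%:R : {poly 'F_2}) = 0.
  by rewrite -(rmorph_nat polyC) [2%:R : 'F_2](_ : _ = 0) ?polyC0 //; apply/val_inj.
by rewrite /diag_star mmapD !mmapX !mmap1U -mulr2n -mulr_natr char2 mulr0.
Qed.

Lemma zero_divisor_mwiden m s (p : {mpoly 'F_2[s]}) :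
  zero_divisor m s p -> zero_divisor m s.+1 (mwiden p).
Proof. by move=> zd_p i le_im; rewrite diag_star_mwiden zd_p. Qed.

Lemma zero_divisor_addX m s (i j : 'I_s) : zero_divisor m s ('X_i + 'X_j).
Proof. by move=> l _; rewrite diag_star_addX coef0. Qed.

Lemma zero_divisor_vanishes_below m s (p : {mpoly 'F_2[s]}) :
  zero_divisor m s p -> vanishes_below p 1.
Proof.
move=> zd_p mu; rewrite ltnS leqn0 mdeg_eq0 => /eqP ->.
by rewrite -coef0_diag_star zd_p.
Qed.

Lemma has_zd_product0 m s : has_zd_product m s 0.
Proof.
exists (fun _ => 0); split; first by case.
exists 0%MM; split; first by move=> i; rewrite mnm0E.
by rewrite big_ord0 mcoeff1 eqxx oner_neq0.
Qed.

Lemma has_zd_product_le m s k : has_zd_product m s k -> (k <= s * m)%N.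
Proof.
case=> f [zd_f [mu [mu_le nz_mu]]].
have prod_low := vanishes_below_prod (fun j => zero_divisor_vanishes_below (zd_f j)).
have [lt_mu|le_mu] := ltnP (mdeg mu) k; first by rewrite prod_low ?eqxx in nz_mu.
apply: (leq_trans le_mu); rewrite mdegE.
apply: (@leq_trans (\sum_(i < s) m)%N); first exact: leq_sum.
by rewrite sum_nat_const card_ord.
Qed.

Lemma has_zd_product_extend m s k :
  has_zd_product m s.+1 k -> has_zd_product m s.+2 (k + m).
Proof.
case=> f [zd_f [mu [mu_le nz_mu]]].
pose z : {mpoly 'F_2[s.+2]} := 'X_ord_max + 'X_ord0.
pose f' (j : 'I_(k + m)) := if split j is inl a then mwiden (f a) else z.
exists f'; split.
  by move=> j; rewrite /f'; case: split => [a|_];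
    [apply: zero_divisor_mwiden | apply: zero_divisor_addX].
have -> : \prod_(j < k + m) f' j = mwiden (\prod_(j < k) f j) * z ^+ m.
  rewrite big_split_ord /= rmorph_prod; congr (_ * _).
    by apply: eq_bigr => j _; rewrite /f' (unsplitK (inl _ j)).
  rewrite (eq_bigr (fun _ => z)) ?prodr_const ?card_ord // => j _.
  by rewrite /f' (unsplitK (inr _ j)).
exists (mnmwiden mu + U_(ord_max) *+ m)%MM; split.
  move=> i; rewrite mnmDE mulmnE mnm1E.
  case: eqVneq => [<-|_]; first by rewrite mnmwiden_ordmax mul1n.
  by rewrite mul0n addn0 mnmwiden_le.
rewrite mcoeffMz_exp_top ?mwiden_mnmwiden //.
by rewrite mnmwiden_ordmax; apply: degX_le_mwiden.
Qed.

Lemma bounded_nat_pred_has_max (P : nat -> Prop) b :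
  P 0%N -> (forall k, P k -> k <= b)%N -> exists K, P K /\ forall k, P k -> (k <= K)%N.
Proof.
elim: b => [|b IHb] P0 P_le; first by exists 0%N.
have [Pb1|notPb1] := classic (P b.+1); first by exists b.+1.
apply: IHb => // k Pk; have := P_le k Pk; rewrite leq_eqVlt ltnS => /predU1P [eq_k|//].
by rewrite eq_k in Pk.
Qed.

Lemma zcl_spec m s : is_zcl m s (zcl m s).
Proof.
apply: epsilon_spec.
exact: bounded_nat_pred_has_max (has_zd_product0 m s) (@has_zd_product_le m s).
Qed.

Lemma zcl_le m s : (zcl m s <= s * m)%N.
Proof. by apply: has_zd_product_le; case: (zcl_spec m s). Qed.

Lemma zcl_extend m s : (zcl m s.+1 + m <= zcl m s.+2)%N.
Proof.
have [zd_s _] := zcl_spec m s.+1.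
have [_ zcl_max] := zcl_spec m s.+2.
exact: zcl_max (has_zd_product_extend zd_s).
Qed.

Theorem lemma4p3 (m : nat) : (1 <= m)%N ->
  (forall s : nat, (2 <= s)%N -> (G m s.+1 <= G m s)%R) /\
  (forall s : nat, (2 <= s)%N -> (0 <= G m s)%R).
Proof.
move=> _; split => -[|s] // _; rewrite /G.
  by have := zcl_extend m s; lia.
by have := zcl_le m s.+1; lia.
Qed.
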